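(* Let $C>0$. There exist $\epsilon_0>0$ and $q_0$, depending only on $C$ and $\Gamma$, such that for every prime $q\geq q_0$, every $0<h\leq1$, every $j\in\{1,\dots,2p\}$, every $z\in\mathcal D_j$, every $n\leq\epsilon_0(\log q+\log h^{-1})$ and all $\alpha,\beta\in\mathscr W_n^j$: if $\gamma_\alpha\equiv\gamma_\beta\bmod q$ and $|\gamma_\alpha(z)-\gamma_\beta(z)|\leq Ch$, then $\alpha=\beta$.
   Context: Schottky setup: $\Gamma\subset PSL_2(\mathbb Z)$ is a non-elementary convex co-compact subgroup realized as a Schottky group: there are open Euclidean discs $\mathcal D_1,\dots,\mathcal D_{2p}\subset\mathbb C$ with centers on $\mathbb R$ and pairwise disjoint closures, and matrices $\gamma_1,\dots,\gamma_p\in SL_2(\mathbb Z)$ acting as Möbius maps with $\gamma_i(\mathcal D_i)=\widehat{\mathbb C}\setminus\overline{\mathcal D_{p+i}}$; $\Gamma$ is the free group they generate. Put $\gamma_{p+i}=\gamma_i^{-1}$ (indices mod $2p$). Let $\mathscr W_n$ be the set of $\alpha=(\alpha_1,\dots,\alpha_n)\in\{1,\dots,2p\}^n$ with $\alpha_{i+1}\neq\alpha_i+p\pmod{2p}$ for all $i$, $\mathscr W_n^j=\{\alpha\in\mathscr W_n:\alpha_n\neq j\}$, and $\gamma_\alpha=\gamma_{\alpha_1}\cdots\gamma_{\alpha_n}$, viewed both as a matrix in $SL_2(\mathbb Z)$ and as a Möbius map. *)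

From Stdlib Require Import Reals ZArith Znumtheory List Lia.
Import ListNotations.
Open Scope R_scope.

Definition Cx := (R * R)%type.
Definition Cadd (z w : Cx) : Cx := (fst z + fst w, snd z + snd w).
Definition Cmul (z w : Cx) : Cx :=
  (fst z * fst w - snd z * snd w, fst z * snd w + snd z * fst w).
Definition Cinv (z : Cx) : Cx :=
  let n := fst z * fst z + snd z * snd z in (fst z / n, - snd z / n).
Definition Cdiv (z w : Cx) : Cx := Cmul z (Cinv w).
Definition Cofr (x : R) : Cx := (x, 0).
Definition Cabs (z : Cx) : R := sqrt (fst z * fst z + snd z * snd z).
Definition Cdist (z w : Cx) : R := Cabs (Cadd z (Cmul (Cofr (-1)) w)).

(* 2x2 integer matrices (a, b, c, d) = [[a, b], [c, d]]. *)
Record mat := Mat { ma : Z; mb : Z; mc : Z; md : Z }.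
Definition mmul (M N : mat) : mat :=
  Mat (ma M * ma N + mb M * mc N)%Z (ma M * mb N + mb M * md N)%Z
      (mc M * ma N + md M * mc N)%Z (mc M * mb N + md M * md N)%Z.
Definition mid : mat := Mat 1 0 0 1.
Definition mdet (M : mat) : Z := (ma M * md M - mb M * mc M)%Z.
(* inverse of an SL_2(Z) matrix *)
Definition minv (M : mat) : mat := Mat (md M) (- mb M)%Z (- mc M)%Z (ma M).

Definition mat_cong (q : Z) (M N : mat) : Prop :=
  (q | ma M - ma N)%Z /\ (q | mb M - mb N)%Z /\
  (q | mc M - mc N)%Z /\ (q | md M - md N)%Z.

(* Moebius action on C (used where the denominator is nonzero). *)
Definition mobC (M : mat) (z : Cx) : Cx :=
  Cdiv (Cadd (Cmul (Cofr (IZR (ma M))) z) (Cofr (IZR (mb M))))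
       (Cadd (Cmul (Cofr (IZR (mc M))) z) (Cofr (IZR (md M)))).

(* Riemann sphere: None = infinity. *)
Definition Chat := option Cx.
Definition mob (M : mat) (w : Chat) : Chat :=
  match w with
  | None => if Z.eq_dec (mc M) 0 then None
            else Some (Cofr (IZR (ma M) / IZR (mc M)))
  | Some z =>
      let den := Cadd (Cmul (Cofr (IZR (mc M))) z) (Cofr (IZR (md M))) in
      if (Req_EM_T (fst den) 0) then
        (if Req_EM_T (snd den) 0 then None else Some (mobC M z))
      else Some (mobC M z)
  end.

(* Discs with real centers cen k and radii rad k (indices k = 0 .. 2p-1). *)
Definition in_disc (cen rad : nat -> R) (k : nat) (z : Cx) : Prop :=
  (fst z - cen k) ^ 2 + (snd z) ^ 2 < rad k ^ 2.
Definition in_cdisc (cen rad : nat -> R) (k : nat) (z : Cx) : Prop :=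
  (fst z - cen k) ^ 2 + (snd z) ^ 2 <= rad k ^ 2.
Definition in_disc_hat cen rad k (w : Chat) : Prop :=
  match w with None => False | Some z => in_disc cen rad k z end.
Definition in_cdisc_hat cen rad k (w : Chat) : Prop :=
  match w with None => False | Some z => in_cdisc cen rad k z end.

(* Generators, 0-based: gen k = gam k for k < p, gen (p+i) = (gam i)^{-1}. *)
Definition gen (p : nat) (gam : nat -> mat) (k : nat) : mat :=
  if Nat.ltb k p then gam k else minv (gam (k - p)%nat).

Definition schottky (p : nat) (gam : nat -> mat) (cen rad : nat -> R) : Prop :=
  (2 <= p)%nat /\
  (forall i, (i < p)%nat -> mdet (gam i) = 1%Z) /\
  (forall k, (k < 2 * p)%nat -> 0 < rad k) /\
  (forall k l, (k < 2 * p)%nat -> (l < 2 * p)%nat -> k <> l ->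
     rad k + rad l < Rabs (cen k - cen l)) /\
  (forall i, (i < p)%nat -> forall w : Chat,
     in_disc_hat cen rad i w <-> ~ in_cdisc_hat cen rad (p + i) (mob (gam i) w)).

(* Reduced words of length n (0-based letters). *)
Definition is_word (p n : nat) (a : list nat) : Prop :=
  length a = n /\ Forall (fun k => (k < 2 * p)%nat) a /\
  (forall i, (S i < n)%nat -> nth (S i) a 0%nat <> ((nth i a 0%nat + p) mod (2 * p))%nat).

Definition is_word_j (p n j : nat) (a : list nat) : Prop :=
  is_word p n a /\ (n = 0%nat \/ nth (n - 1) a 0%nat <> j).

Definition gword (p : nat) (gam : nat -> mat) (a : list nat) : mat :=
  fold_right (fun k M => mmul (gen p gam k) M) mid a.

(* Two distinct reduced words of length [n] ending away from [j] send
   [z \in D_j] to points at distance at least [c B^(-2n)], where [B] bounds the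
   growth of matrix entries: after their common prefix [S], the two suffixes
   map [z] into two distinct, uniformly separated Schottky discs (ping-pong),
   and the determinant-one map [S], whose entries are at most [B^n], shrinks
   distances by the factor [1 / |cX + d| |cY + d| >= (B^n R)^(-2)].
   If that distance is at most [C h] and [n <= eps0 (log q + log (1/h))] with
   [eps0] small, then [B^n < q / 2], so the congruence modulo [q] forces
   [gamma_alpha = gamma_beta]: the images coincide, contradicting the lower
   bound. *)

From Pilot Require Import Defs.
From Stdlib Require Import Reals ZArith Znumtheory List Lia Lra Classical.
From Coquelicot Require Import Coquelicot.
Import ListNotations.
Open Scope R_scope.

Definition mnum (M : mat) (z : C) : C := (RtoC (IZR (ma M)) * z + RtoC (IZR (mb M)))%C.
Definition mden (M : mat) (z : C) : C := (RtoC (IZR (mc M)) * z + RtoC (IZR (md M)))%C.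

Lemma Cinv_eq z : Defs.Cinv z = Cinv z.
Proof. unfold Defs.Cinv, Cinv; simpl. f_equal; f_equal; ring. Qed.

Lemma mobC_eq M z : mobC M z = (mnum M z / mden M z)%C.
Proof. unfold mobC, Defs.Cdiv. rewrite Cinv_eq. reflexivity. Qed.

Lemma Cdist_Cmod u v : Cdist u v = Cmod (u - v).
Proof. destruct u, v; unfold Cdist, Cabs, Cmod; simpl; f_equal; ring. Qed.

Lemma RtoC_IZR_plus a b : RtoC (IZR (a + b)) = (RtoC (IZR a) + RtoC (IZR b))%C.
Proof. rewrite plus_IZR. apply RtoC_plus. Qed.

Lemma RtoC_IZR_mult a b : RtoC (IZR (a * b)) = (RtoC (IZR a) * RtoC (IZR b))%C.
Proof. rewrite mult_IZR. apply RtoC_mult. Qed.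

Lemma mnum_mmul M N z : mden N z <> 0%C ->
  mnum (mmul M N) z = (mnum M (mobC N z) * mden N z)%C.
Proof.
  intro H. rewrite mobC_eq. unfold mden in H.
  unfold mnum, mden, mmul; simpl. rewrite !RtoC_IZR_plus, !RtoC_IZR_mult.
  field. exact H.
Qed.

Lemma mden_mmul M N z : mden N z <> 0%C ->
  mden (mmul M N) z = (mden M (mobC N z) * mden N z)%C.
Proof.
  intro H. rewrite mobC_eq. unfold mden in H.
  unfold mnum, mden, mmul; simpl. rewrite !RtoC_IZR_plus, !RtoC_IZR_mult.
  field. exact H.
Qed.

Lemma mden_mmul_neq0 M N z : mden (mmul M N) z <> 0%C -> mden N z <> 0%C ->
  mden M (mobC N z) <> 0%C.
Proof. intros H HN E. apply H. rewrite mden_mmul, E by exact HN. apply Cmult_0_l. Qed.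

Lemma mobC_mmul M N z : mden N z <> 0%C -> mden M (mobC N z) <> 0%C ->
  mobC (mmul M N) z = mobC M (mobC N z).
Proof.
  intros HN HM. rewrite (mobC_eq (mmul M N)), mnum_mmul, mden_mmul by exact HN.
  rewrite (mobC_eq M (mobC N z)).
  match goal with |- ?x = ?y => change (@eq C x y) end.
  field. split; assumption.
Qed.

Lemma mob_Some M z : mob M (Some z) =
  (if Ceq_dec (mden M z) 0 then None else Some (mobC M z)).
Proof.
  unfold mob; cbv zeta.
  change (Cadd (Cmul (Cofr (IZR (mc M))) z) (Cofr (IZR (md M)))) with (mden M z).
  destruct (Ceq_dec (mden M z) 0) as [E|E].
  - rewrite E; simpl. now destruct (Req_EM_T 0 0).
  - destruct (Req_EM_T _ 0) as [E1|]; [|reflexivity].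
    destruct (Req_EM_T _ 0) as [E2|]; [|reflexivity].
    exfalso. apply E. destruct (mden M z); simpl in *. now subst.
Qed.

Lemma mmul_assoc A B D : mmul A (mmul B D) = mmul (mmul A B) D.
Proof. destruct A, B, D; unfold mmul; simpl; f_equal; ring. Qed.

Lemma mmul_mid_l A : mmul mid A = A.
Proof. destruct A as [a b c d]; unfold mmul, mid; cbn [ma mb mc md]; f_equal; ring. Qed.

Lemma mmul_mid_r A : mmul A mid = A.
Proof. destruct A as [a b c d]; unfold mmul, mid; cbn [ma mb mc md]; f_equal; ring. Qed.

Lemma mdet_mmul A B : mdet (mmul A B) = (mdet A * mdet B)%Z.
Proof. destruct A, B; unfold mdet, mmul; simpl; ring. Qed.

Lemma mdet_minv A : mdet (minv A) = mdet A.
Proof. destruct A; unfold mdet, minv; simpl; ring. Qed.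

Lemma mmul_minv A : mdet A = 1%Z -> mmul A (minv A) = mid.
Proof. destruct A; unfold mdet, mmul, minv, mid; simpl; intro H; f_equal; lia. Qed.

Lemma mden_mid z : mden mid z = 1%C.
Proof. unfold mden, mid; simpl. apply injective_projections; simpl; ring. Qed.

Lemma mobC_mid z : mobC mid z = z.
Proof.
  rewrite mobC_eq, mden_mid. unfold mnum, mid; simpl.
  apply injective_projections; simpl; field.
Qed.

(* At a pole of [minv A] the point is [a / c] (with [c <> 0], as [ad - bc = 1]),
   which [A] maps from infinity back to itself. *)
Lemma mob_minv A z : mdet A = 1%Z -> mob A (mob (minv A) (Some z)) = Some z.
Proof.
  intro Hd. rewrite (mob_Some (minv A)).
  destruct (Ceq_dec (mden (minv A) z) 0) as [E|E].
  - destruct A as [a b c d], z as [x y]. unfold mdet in Hd. unfold mden in E; simpl in *.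
    rewrite opp_IZR in E.
    assert (E1 := f_equal fst E). assert (E2 := f_equal snd E). simpl in E1, E2.
    destruct (Z.eq_dec c 0) as [->|Hc].
    + assert (IZR a = 0) by lra. apply eq_IZR in H. subst. lia.
    + apply not_0_IZR in Hc. unfold Cofr. f_equal. f_equal; [field_simplify_eq; lra|nra].
  - assert (H := mden_mmul A (minv A) z E). rewrite mmul_minv, mden_mid in H by exact Hd.
    assert (HA : mden A (mobC (minv A) z) <> 0%C).
    { intro Z0. rewrite Z0, Cmult_0_l in H. exact (C1_nz H). }
    rewrite mob_Some. destruct Ceq_dec as [|_]; [contradiction|].
    rewrite <- mobC_mmul, mmul_minv, mobC_mid by assumption. reflexivity.
Qed.

Definition inv_letter (p k : nat) : nat := ((k + p) mod (2 * p))%nat.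

Lemma inv_letter_lo p k : (k < p)%nat -> inv_letter p k = (p + k)%nat.
Proof. intro. unfold inv_letter. rewrite Nat.mod_small; lia. Qed.

Lemma inv_letter_hi p k : (p <= k < 2 * p)%nat -> inv_letter p k = (k - p)%nat.
Proof. intro. unfold inv_letter. symmetry. apply (Nat.mod_unique _ _ 1); lia. Qed.

Lemma inv_letter_lt p k : (0 < p)%nat -> (inv_letter p k < 2 * p)%nat.
Proof. intro. apply Nat.mod_upper_bound. lia. Qed.

Lemma inv_letterK p k : (k < 2 * p)%nat -> inv_letter p (inv_letter p k) = k.
Proof.
  intro Hk. destruct (Nat.lt_ge_cases k p).
  - rewrite (inv_letter_lo p k), inv_letter_hi by lia. lia.
  - rewrite (inv_letter_hi p k), inv_letter_lo by lia. lia.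
Qed.

Lemma inv_letter_inj p k l : (k < 2 * p)%nat -> (l < 2 * p)%nat ->
  inv_letter p k = inv_letter p l -> k = l.
Proof. intros Hk Hl E. rewrite <- (inv_letterK p k), <- (inv_letterK p l), E; auto. Qed.

Section Discs.

Variables (cen rad : nat -> R).

Lemma in_disc_cdisc k z : in_disc cen rad k z -> in_cdisc cen rad k z.
Proof. unfold in_disc, in_cdisc. lra. Qed.

Lemma in_cdisc_re k z : 0 < rad k -> in_cdisc cen rad k z -> Rabs (fst z - cen k) <= rad k.
Proof.
  unfold in_cdisc. intros Hr H. assert (0 <= snd z ^ 2) by apply pow2_ge_0.
  unfold Rabs. destruct Rcase_abs; nra.
Qed.

Lemma Cmod_cdisc_le k z : in_cdisc cen rad k z -> 0 < rad k -> Cmod z <= Rabs (cen k) + rad k.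
Proof.
  intros H Hr.
  assert (Hd : Cmod (z - RtoC (cen k)) <= rad k).
  { unfold Cmod. rewrite <- (sqrt_pow2 (rad k)) by lra. apply sqrt_le_1_alt.
    unfold in_cdisc in H. simpl. lra. }
  replace z with ((z - RtoC (cen k)) + RtoC (cen k))%C at 1 by ring.
  eapply Rle_trans; [apply Cmod_triangle|]. rewrite Cmod_R. lra.
Qed.

Lemma cdisc_sep k l x y : 0 < rad k -> 0 < rad l ->
  in_cdisc cen rad k x -> in_cdisc cen rad l y ->
  Rabs (cen k - cen l) - rad k - rad l <= Cmod (x - y).
Proof.
  intros Hk Hl Hx Hy.
  assert (A := in_cdisc_re k x Hk Hx). assert (B := in_cdisc_re l y Hl Hy).
  eapply Rle_trans; [|apply (re_le_Cmod (x - y))]. simpl.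
  revert A B. unfold Rabs. repeat destruct Rcase_abs; lra.
Qed.

End Discs.

Section PingPong.

Variables (p : nat) (gam : nat -> mat) (cen rad : nat -> R).
Hypothesis HS : schottky p gam cen rad.

Lemma schottky_p_pos : (0 < p)%nat.
Proof. destruct HS; lia. Qed.

Lemma schottky_rad_pos k : (k < 2 * p)%nat -> 0 < rad k.
Proof. destruct HS as (_ & _ & Hrad & _). apply Hrad. Qed.

Lemma cdisc_disjoint k l z : (k < 2 * p)%nat -> (l < 2 * p)%nat -> k <> l ->
  in_cdisc cen rad k z -> in_cdisc cen rad l z -> False.
Proof.
  intros Hk Hl Hkl A B. destruct HS as (_ & _ & _ & Hsep & _).
  assert (H := cdisc_sep cen rad k l z z (schottky_rad_pos k Hk) (schottky_rad_pos l Hl) A B).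
  replace (z - z)%C with (RtoC 0) in H by ring. rewrite Cmod_0 in H.
  assert (H2 := Hsep k l Hk Hl Hkl). lra.
Qed.

Lemma gen_maps_cdisc k l z : (k < 2 * p)%nat -> (l < 2 * p)%nat -> k <> l ->
  in_cdisc cen rad l z ->
  mden (gen p gam k) z <> 0%C /\ in_cdisc cen rad (inv_letter p k) (mobC (gen p gam k) z).
Proof.
  intros Hk Hl Hkl Hz. pose proof HS as (_ & Hdet & _ & _ & Hmap).
  assert (Hnk : ~ in_cdisc cen rad k z) by (intro D; exact (cdisc_disjoint k l z Hk Hl Hkl D Hz)).
  unfold gen. destruct (Nat.ltb_spec k p) as [Hkp|Hkp].
  - rewrite inv_letter_lo by exact Hkp.
    assert (H : in_cdisc_hat cen rad (p + k) (mob (gam k) (Some z))).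
    { apply NNPP. intro N. apply Hnk. apply in_disc_cdisc. now apply (Hmap k Hkp (Some z)). }
    rewrite mob_Some in H. destruct Ceq_dec; [contradiction|]. split; assumption.
  - rewrite inv_letter_hi by lia.
    set (i := (k - p)%nat). replace k with (p + i)%nat in Hnk by (unfold i; lia).
    assert (H := Hmap i ltac:(unfold i; lia) (mob (minv (gam i)) (Some z))).
    rewrite mob_minv in H by (apply Hdet; unfold i; lia).
    apply H in Hnk. rewrite mob_Some in Hnk.
    destruct Ceq_dec; [contradiction|]. split; [assumption|]. now apply in_disc_cdisc.
Qed.

Definition reduced (w : list nat) : Prop :=
  List.Forall (fun k => (k < 2 * p)%nat) w /\
  (forall i, (S i < length w)%nat -> nth (S i) w 0%nat <> inv_letter p (nth i w 0%nat)).

Lemma reduced_cons a w : reduced (a :: w) -> reduced w.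
Proof.
  intros [H1 H2]. split; [now inversion H1|].
  intros i Hi. apply (H2 (S i)). simpl. lia.
Qed.

Lemma reduced_app s t : reduced (s ++ t) -> reduced t.
Proof. induction s as [|a s IH]; [easy|]. intro H. apply IH, (reduced_cons a), H. Qed.

(* Ping-pong: each letter moves the closed disc of the previous image into the
   closed disc of its inverse letter, which differs from the next letter. *)
Lemma gword_maps_cdisc w l z : w <> [] -> reduced w -> (l < 2 * p)%nat ->
  last w 0%nat <> l -> in_cdisc cen rad l z ->
  mden (gword p gam w) z <> 0%C /\
  in_cdisc cen rad (inv_letter p (hd 0%nat w)) (mobC (gword p gam w) z).
Proof.
  intros Hne Hr Hl Hlast Hz. induction w as [|a w IH]; [contradiction|].
  destruct Hr as [Hf Hrr]. inversion Hf as [|? ? Ha Hf']; subst.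
  destruct w as [|b w].
  - simpl. rewrite mmul_mid_r. apply (gen_maps_cdisc a l z); assumption.
  - destruct IH as [D1 I1]; try easy.
    { apply (reduced_cons a). split; assumption. }
    assert (Hab : a <> inv_letter p b).
    { intro E. apply (Hrr 0%nat); simpl; [lia|].
      rewrite E, inv_letterK; [reflexivity|now inversion Hf']. }
    destruct (gen_maps_cdisc a _ _ Ha (inv_letter_lt p b schottky_p_pos) Hab I1) as [D2 I2].
    change (gword p gam (a :: b :: w)) with (mmul (gen p gam a) (gword p gam (b :: w))).
    rewrite mden_mmul, mobC_mmul by assumption.
    split; [apply Cmult_neq_0|]; assumption.
Qed.

End PingPong.

Lemma nth_pred_length (w : list nat) d : nth (length w - 1) w d = last w d.
Proof.
  induction w as [|a [|b w] IH]; [reflexivity|reflexivity|].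
  simpl in *. rewrite Nat.sub_0_r in IH. exact IH.
Qed.

Lemma last_app_cons (s t : list nat) x d : last (s ++ x :: t) d = last (x :: t) d.
Proof.
  induction s as [|a s IH]; [reflexivity|].
  rewrite <- IH. destruct s; reflexivity.
Qed.

Lemma is_word_reduced p n a : is_word p n a -> reduced p a.
Proof. intros (H1 & H2 & H3). split; [exact H2|]. intros i Hi. apply H3. lia. Qed.

Lemma is_word_j_last p n j a : is_word_j p n j a -> a <> [] -> last a 0%nat <> j.
Proof.
  intros [(Hl & _ & _) Hj] Hne. rewrite <- nth_pred_length, Hl.
  destruct Hj as [->|Hj]; [|exact Hj]. destruct a; [contradiction|discriminate].
Qed.

Lemma first_difference (a b : list nat) : length a = length b -> a <> b ->
  exists s x y a' b', a = s ++ x :: a' /\ b = s ++ y :: b' /\ x <> y.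
Proof.
  revert b. induction a as [|x a IH]; intros [|y b] Hl Hne; try discriminate; [easy|].
  destruct (Nat.eq_dec x y) as [<-|Hxy].
  - destruct (IH b ltac:(simpl in Hl; lia) ltac:(congruence))
      as (s & x' & y' & a' & b' & -> & -> & H).
    now exists (x :: s), x', y', a', b'.
  - now exists [], x, y, a, b.
Qed.

Lemma gword_app p gam s t : gword p gam (s ++ t) = mmul (gword p gam s) (gword p gam t).
Proof.
  induction s as [|a s IH]; simpl.
  - now rewrite mmul_mid_l.
  - now rewrite IH, mmul_assoc.
Qed.

Lemma mdet_gword p gam w : (forall i, (i < p)%nat -> mdet (gam i) = 1%Z) ->
  List.Forall (fun k => (k < 2 * p)%nat) w -> mdet (gword p gam w) = 1%Z.
Proof.
  intros Hd Hf. induction Hf as [|a w Ha _ IH]; [reflexivity|].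
  simpl. rewrite mdet_mmul, IH. unfold gen. destruct (Nat.ltb_spec a p).
  - now rewrite Hd.
  - rewrite mdet_minv, Hd; [reflexivity|lia].
Qed.

Definition mat_bounded (K : Z) (M : mat) : Prop :=
  (Z.abs (ma M) <= K /\ Z.abs (mb M) <= K /\ Z.abs (mc M) <= K /\ Z.abs (md M) <= K)%Z.

Lemma mat_bounded_mono K K' M : (K <= K')%Z -> mat_bounded K M -> mat_bounded K' M.
Proof. unfold mat_bounded. lia. Qed.

Lemma Zabs_dot_le x1 y1 x2 y2 K1 K2 : (Z.abs x1 <= K1)%Z -> (Z.abs x2 <= K1)%Z ->
  (Z.abs y1 <= K2)%Z -> (Z.abs y2 <= K2)%Z -> (Z.abs (x1 * y1 + x2 * y2) <= 2 * K1 * K2)%Z.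
Proof.
  intros. eapply Z.le_trans; [apply Z.abs_triangle|]. rewrite !Z.abs_mul.
  assert (Z.abs x1 * Z.abs y1 <= K1 * K2)%Z by (apply Z.mul_le_mono_nonneg; lia).
  assert (Z.abs x2 * Z.abs y2 <= K1 * K2)%Z by (apply Z.mul_le_mono_nonneg; lia).
  lia.
Qed.

Lemma mat_bounded_mmul K1 K2 M N : mat_bounded K1 M -> mat_bounded K2 N ->
  mat_bounded (2 * K1 * K2) (mmul M N).
Proof.
  intros (A1 & B1 & C1 & D1) (A2 & B2 & C2 & D2). unfold mmul, mat_bounded; cbn [ma mb mc md].
  repeat split; apply Zabs_dot_le; assumption.
Qed.

Lemma gen_bounded_exists p gam : exists K, (1 <= K)%Z /\
  forall k, (k < 2 * p)%nat -> mat_bounded K (gen p gam k).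
Proof.
  generalize (2 * p)%nat as N. induction N as [|N [K [HK H]]].
  - exists 1%Z. split; [lia|]. intros; lia.
  - set (M := gen p gam N).
    exists (Z.max K (Z.max (Z.max (Z.abs (ma M)) (Z.abs (mb M))) (Z.max (Z.abs (mc M)) (Z.abs (md M))))).
    split; [lia|]. intros k Hk. destruct (Nat.eq_dec k N) as [->|Hne].
    + unfold mat_bounded. fold M. lia.
    + eapply mat_bounded_mono, H; lia.
Qed.

Lemma gword_bounded p gam K w : (1 <= K)%Z ->
  (forall k, (k < 2 * p)%nat -> mat_bounded K (gen p gam k)) ->
  List.Forall (fun k => (k < 2 * p)%nat) w ->
  mat_bounded ((2 * K) ^ Z.of_nat (length w)) (gword p gam w).
Proof.
  intros HK Hg Hf. induction Hf as [|a w Ha _ IH].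
  - unfold mat_bounded, mid; simpl. lia.
  - simpl length. rewrite Nat2Z.inj_succ, Z.pow_succ_r by lia.
    apply mat_bounded_mmul; auto.
Qed.

Lemma mobC_sub M X Y : mdet M = 1%Z -> mden M X <> 0%C -> mden M Y <> 0%C ->
  (mobC M X - mobC M Y)%C = ((X - Y) / (mden M X * mden M Y))%C.
Proof.
  intros Hd HX HY. rewrite !mobC_eq.
  assert (E : (RtoC (IZR (ma M)) * RtoC (IZR (md M)) - RtoC (IZR (mb M)) * RtoC (IZR (mc M)))%C = 1%C).
  { rewrite <- !RtoC_mult, <- RtoC_minus, <- !mult_IZR, <- minus_IZR.
    unfold mdet in Hd. now rewrite Hd. }
  rewrite <- (Cmult_1_l (X - Y)), <- E. unfold mnum. unfold mden in *.
  field. split; assumption.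
Qed.

Lemma Cmod_mden_le M X W r : Rabs (IZR (mc M)) <= W -> Rabs (IZR (md M)) <= W ->
  Cmod X <= r -> Cmod (mden M X) <= W * (r + 1).
Proof.
  intros Hc Hd HX. unfold mden. eapply Rle_trans; [apply Cmod_triangle|].
  rewrite Cmod_mult, !Cmod_R.
  assert (0 <= Rabs (IZR (mc M))) by apply Rabs_pos. assert (0 <= Cmod X) by apply Cmod_ge_0.
  nra.
Qed.

Lemma mobC_dist_lower M X Y W r d : mdet M = 1%Z -> mden M X <> 0%C -> mden M Y <> 0%C ->
  Rabs (IZR (mc M)) <= W -> Rabs (IZR (md M)) <= W -> Cmod X <= r -> Cmod Y <= r ->
  0 <= d -> d <= Cmod (X - Y) ->
  d / (W * (r + 1)) ^ 2 <= Cmod (mobC M X - mobC M Y).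
Proof.
  intros Hdet HX HY Hc Hd BX BY Hd0 Hdist.
  rewrite mobC_sub, Cmod_div, Cmod_mult by (try apply Cmult_neq_0; assumption).
  assert (PX : 0 < Cmod (mden M X)) by (apply Cmod_gt_0; exact HX).
  assert (PY : 0 < Cmod (mden M Y)) by (apply Cmod_gt_0; exact HY).
  assert (LX := Cmod_mden_le M X W r Hc Hd BX). assert (LY := Cmod_mden_le M Y W r Hc Hd BY).
  unfold Rdiv. apply Rmult_le_compat; [assumption|left; apply Rinv_0_lt_compat; nra|assumption|].
  apply Rinv_le_contravar; [nra|]. simpl. rewrite Rmult_1_r. apply Rmult_le_compat; lra.
Qed.

Section Separation.

Variables (p : nat) (gam : nat -> mat) (cen rad : nat -> R).
Hypothesis HS : schottky p gam cen rad.
Variables (dl R1 : R) (K : Z).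
Hypothesis Hdl : 0 < dl.
Hypothesis Hsep : forall k l, (k < 2 * p)%nat -> (l < 2 * p)%nat -> k <> l ->
  dl <= Rabs (cen k - cen l) - rad k - rad l.
Hypothesis HR1p : 0 <= R1.
Hypothesis HR1 : forall k, (k < 2 * p)%nat -> Rabs (cen k) + rad k <= R1.
Hypothesis HK : (1 <= K)%Z.
Hypothesis Hgen : forall k, (k < 2 * p)%nat -> mat_bounded K (gen p gam k).

Lemma Cmod_cdisc_R1 k X : (k < 2 * p)%nat -> in_cdisc cen rad k X -> Cmod X <= R1.
Proof.
  intros Hk HX. eapply Rle_trans; [|exact (HR1 k Hk)].
  exact (Cmod_cdisc_le cen rad k X HX (schottky_rad_pos p gam cen rad HS k Hk)).
Qed.

Lemma word_suffix_image n j z s x t : (j < 2 * p)%nat -> in_cdisc cen rad j z ->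
  is_word_j p n j (s ++ x :: t) ->
  exists X, mobC (gword p gam (s ++ x :: t)) z = mobC (gword p gam s) X /\
    mden (gword p gam s) X <> 0%C /\ in_cdisc cen rad (inv_letter p x) X /\ (x < 2 * p)%nat.
Proof.
  intros Hj Hz Hw.
  assert (Hr := is_word_reduced p n (s ++ x :: t) (proj1 Hw)).
  assert (Hl := is_word_j_last p n j (s ++ x :: t) Hw ltac:(destruct s; discriminate)).
  destruct (gword_maps_cdisc p gam cen rad HS (s ++ x :: t) j z) as [Pw _];
    try assumption; [destruct s; discriminate|].
  rewrite last_app_cons in Hl. apply reduced_app in Hr.
  destruct (gword_maps_cdisc p gam cen rad HS (x :: t) j z) as [Dt It]; try easy.
  rewrite gword_app in Pw |- *. exists (mobC (gword p gam (x :: t)) z).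
  repeat split; try assumption.
  - apply mobC_mmul; [|eapply mden_mmul_neq0]; eassumption.
  - eapply mden_mmul_neq0; eassumption.
  - destruct Hr as [Hf _]. now inversion Hf.
Qed.

(* After the common prefix [s], the two suffixes land in the distinct discs of
   the inverses of their first letters. *)
Lemma distinct_words_separate n j z a b : (j < 2 * p)%nat -> in_disc cen rad j z ->
  is_word_j p n j a -> is_word_j p n j b -> a <> b ->
  dl / (IZR (2 * K) ^ n * (R1 + 1)) ^ 2 <=
  Cmod (mobC (gword p gam a) z - mobC (gword p gam b) z).
Proof.
  intros Hj Hz Ha Hb Hab. assert (Hzc := in_disc_cdisc cen rad j z Hz).
  assert (Hn : length a = n) by apply Ha.
  assert (Hlen : length a = length b) by (rewrite Hn; symmetry; apply Hb).
  destruct (first_difference a b Hlen Hab) as (s & x & y & a' & b' & -> & -> & Hxy).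
  destruct (word_suffix_image n j z s x a' Hj Hzc Ha) as (X & -> & DX & IX & Hx).
  destruct (word_suffix_image n j z s y b' Hj Hzc Hb) as (Y & -> & DY & IY & Hy).
  assert (Hp := schottky_p_pos p gam cen rad HS).
  assert (Fs : List.Forall (fun k => (k < 2 * p)%nat) s).
  { apply proj1, is_word_reduced, proj1, Forall_app in Ha. apply Ha. }
  assert (Hbd : mat_bounded ((2 * K) ^ Z.of_nat n) (gword p gam s)).
  { eapply mat_bounded_mono, gword_bounded; try eassumption.
    apply Z.pow_le_mono_r; [lia|]. rewrite <- Hn, length_app. simpl. lia. }
  destruct Hbd as (_ & _ & Hc & Hd).
  assert (Hk : inv_letter p x <> inv_letter p y) by (intro E; exact (Hxy (inv_letter_inj p x y Hx Hy E))).
  apply mobC_dist_lower; try assumption.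
  - apply mdet_gword; [apply HS|exact Fs].
  - rewrite <- abs_IZR, pow_IZR. apply IZR_le. lia.
  - rewrite <- abs_IZR, pow_IZR. apply IZR_le. lia.
  - exact (Cmod_cdisc_R1 _ _ (inv_letter_lt p x Hp) IX).
  - exact (Cmod_cdisc_R1 _ _ (inv_letter_lt p y Hp) IY).
  - lra.
  - eapply Rle_trans; [apply (Hsep _ _ (inv_letter_lt p x Hp) (inv_letter_lt p y Hp) Hk)|].
    apply cdisc_sep; try apply (schottky_rad_pos p gam cen rad HS), inv_letter_lt; assumption.
Qed.

Lemma separation_bound_pos n : 0 < dl / (IZR (2 * K) ^ n * (R1 + 1)) ^ 2.
Proof.
  apply Rdiv_lt_0_compat, pow_lt, Rmult_lt_0_compat; [|apply pow_lt, IZR_lt|]; lia || lra.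
Qed.

Lemma distinct_words_gword_neq n j z a b : (j < 2 * p)%nat -> in_disc cen rad j z ->
  is_word_j p n j a -> is_word_j p n j b -> a <> b -> gword p gam a <> gword p gam b.
Proof.
  intros Hj Hz Ha Hb Hab E. assert (H := distinct_words_separate n j z a b Hj Hz Ha Hb Hab).
  rewrite E in H. replace (_ - _)%C with (RtoC 0) in H by ring. rewrite Cmod_0 in H.
  assert (H0 := separation_bound_pos n). lra.
Qed.

Lemma close_distinct_words_height (C h : R) n j z a b : 0 < C ->
  (j < 2 * p)%nat -> in_disc cen rad j z -> is_word_j p n j a -> is_word_j p n j b -> a <> b ->
  Cmod (mobC (gword p gam a) z - mobC (gword p gam b) z) <= C * h ->
  dl / (C * (R1 + 1) ^ 2) <= h * (IZR (2 * K) ^ n) ^ 2.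
Proof.
  intros HC Hj Hz Ha Hb Hab Hd.
  assert (H := Rle_trans _ _ _ (distinct_words_separate n j z a b Hj Hz Ha Hb Hab) Hd).
  assert (HW : 0 < IZR (2 * K) ^ n) by (apply pow_lt, IZR_lt; lia).
  assert (HX : (IZR (2 * K) ^ n * (R1 + 1)) ^ 2 > 0) by (apply pow_lt, Rmult_lt_0_compat; lra).
  assert (HY : C * (R1 + 1) ^ 2 > 0) by (apply Rmult_lt_0_compat, pow_lt; lra).
  apply (Rle_div_l _ _ _ HX) in H. apply (Rle_div_l _ _ _ HY).
  eapply Rle_trans; [exact H|]. right. ring.
Qed.

End Separation.

Lemma finite_pos_lower_bound (N : nat) (P : nat -> R -> Prop) :
  (forall k d d', P k d -> 0 < d' <= d -> P k d') ->
  (forall k, (k < N)%nat -> exists d, 0 < d /\ P k d) ->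
  exists d, 0 < d /\ forall k, (k < N)%nat -> P k d.
Proof.
  intros Hmono. induction N as [|N IH]; intros H.
  - exists 1. split; [lra|]. intros; lia.
  - destruct IH as (d1 & Hd1 & H1); [intros k Hk; apply H; lia|].
    destruct (H N ltac:(lia)) as (d2 & Hd2 & H2).
    exists (Rmin d1 d2). split; [now apply Rmin_glb_lt|].
    intros k Hk. destruct (Nat.eq_dec k N) as [->|Hne].
    + apply (Hmono _ d2); [exact H2|split; [now apply Rmin_glb_lt|apply Rmin_r]].
    + apply (Hmono _ d1); [apply H1; lia|split; [now apply Rmin_glb_lt|apply Rmin_l]].
Qed.

Lemma disc_separation_const p gam cen rad : schottky p gam cen rad ->
  exists dl, 0 < dl /\ forall k l, (k < 2 * p)%nat -> (l < 2 * p)%nat -> k <> l ->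
    dl <= Rabs (cen k - cen l) - rad k - rad l.
Proof.
  intros (_ & _ & _ & Hsep & _).
  set (g k l := Rabs (cen k - cen l) - rad k - rad l).
  destruct (finite_pos_lower_bound (2 * p)
    (fun k d => forall l, (l < 2 * p)%nat -> k <> l -> d <= g k l)) as (dl & Hdl & H).
  - intros k d d' H Hd' l Hl Hkl. specialize (H l Hl Hkl). lra.
  - intros k Hk. apply (finite_pos_lower_bound (2 * p) (fun l d => k <> l -> d <= g k l)).
    + intros l d d' H Hd' Hkl. specialize (H Hkl). lra.
    + intros l Hl. destruct (Nat.eq_dec k l) as [->|Hkl].
      * exists 1. split; [lra|]. contradiction.
      * exists (g k l). assert (H := Hsep k l Hk Hl Hkl). unfold g. split; [lra|]. intros _. lra.
  - exists dl. split; [exact Hdl|]. intros k l Hk Hl. now apply H.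
Qed.

Lemma disc_radius_const (N : nat) (cen rad : nat -> R) :
  exists R1, 0 <= R1 /\ forall k, (k < N)%nat -> Rabs (cen k) + rad k <= R1.
Proof.
  induction N as [|N (R1 & HR1 & H)].
  - exists 0. split; [lra|]. intros; lia.
  - exists (Rmax R1 (Rabs (cen N) + rad N)). split; [eapply Rle_trans; [|apply Rmax_l]; lra|].
    intros k Hk. destruct (Nat.eq_dec k N) as [->|Hne]; [apply Rmax_r|].
    eapply Rle_trans; [apply H; lia|apply Rmax_l].
Qed.

Lemma Zcong_small_eq (x y M q : Z) : (Z.abs x <= M)%Z -> (Z.abs y <= M)%Z ->
  (2 * M < q)%Z -> (q | x - y)%Z -> x = y.
Proof.
  intros Hx Hy Hq [k Hk].
  destruct (Z.eq_dec k 0) as [->|Hk0]; [lia|].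
  assert (Z.abs (x - y) = Z.abs k * q)%Z by (rewrite Hk, Z.abs_mul; lia).
  nia.
Qed.

Lemma mat_cong_small_eq q M A B : mat_bounded M A -> mat_bounded M B ->
  (2 * M < q)%Z -> mat_cong q A B -> A = B.
Proof.
  destruct A as [a1 b1 c1 d1], B as [a2 b2 c2 d2].
  intros (A1 & A2 & A3 & A4) (B1 & B2 & B3 & B4) Hq (K1 & K2 & K3 & K4).
  cbn [ma mb mc md] in *. f_equal; eapply Zcong_small_eq; eassumption.
Qed.

Lemma ln_le x y : 0 < x -> x <= y -> ln x <= ln y.
Proof. intros Hx [H|<-]; [apply Rlt_le, ln_increasing|]; lra. Qed.

(* A lower bound [c <= h B^(2n)] turns [log (1/h)] into [O(n)], so for
   [eps0 = 1 / 4 (log B + 1)] the entry size [B^n] stays below [q / 2]. *)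
Lemma exp_budget (B c h q : R) (n : nat) : 1 < B -> 0 < c -> 0 < h -> 0 < q ->
  c <= h * (B ^ n) ^ 2 -> Rabs (ln c) + 2 * ln 2 < ln q ->
  INR n <= / (4 * (ln B + 1)) * (ln q + ln (/ h)) -> 2 * B ^ n < q.
Proof.
  intros HB Hc Hh Hq Hlow Hlnq Hn.
  assert (HLB : 0 < ln B) by (rewrite <- ln_1; apply ln_increasing; lra).
  assert (Hn0 := pos_INR n). assert (Hln2 := ln_lt_2).
  assert (Hlnc : ln c <= ln h + INR n * (2 * ln B)).
  { eapply Rle_trans; [apply ln_le; eassumption|].
    rewrite ln_mult, !ln_pow by (repeat apply pow_lt; lra). simpl INR. nra. }
  assert (Hbudget : INR n * (4 * (ln B + 1)) <= ln q - ln h).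
  { replace (ln q - ln h) with (/ (4 * (ln B + 1)) * (ln q + ln (/ h)) * (4 * (ln B + 1)))
      by (rewrite ln_Rinv by lra; field; lra).
    apply Rmult_le_compat_r; lra. }
  assert (Habs := Rle_abs (- ln c)). rewrite Rabs_Ropp in Habs.
  enough (B ^ n < q * / 2) by lra.
  apply ln_lt_inv; [apply pow_lt; lra|lra|].
  rewrite ln_pow, ln_mult, ln_Rinv by lra. nra.
Qed.

Lemma lt_ln_of_up_le x (q : Z) : (up (exp x) <= q)%Z -> x < ln (IZR q).
Proof.
  intro H. destruct (archimed (exp x)) as [Hup _]. apply IZR_le in H.
  rewrite <- (ln_exp x) at 1. apply ln_increasing; [apply exp_pos|lra].
Qed.

Theorem corollary4p5 (p : nat) (gam : nat -> mat) (cen rad : nat -> R)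
  (HS : schottky p gam cen rad) (C : R) (HC : 0 < C) :
  exists eps0 : R, 0 < eps0 /\ exists q0 : Z,
    forall (q : Z), prime q -> (q0 <= q)%Z ->
    forall h : R, 0 < h -> h <= 1 ->
    forall j : nat, (j < 2 * p)%nat ->
    forall z : Cx, in_disc cen rad j z ->
    forall n : nat, INR n <= eps0 * (ln (IZR q) + ln (/ h)) ->
    forall a b : list nat, is_word_j p n j a -> is_word_j p n j b ->
    mat_cong q (gword p gam a) (gword p gam b) ->
    Cdist (mobC (gword p gam a) z) (mobC (gword p gam b) z) <= C * h ->
    a = b.
Proof.
  destruct (disc_separation_const p gam cen rad HS) as (dl & Hdl & Hsep).
  destruct (disc_radius_const (2 * p) cen rad) as (R1 & HR1p & HR1).
  destruct (gen_bounded_exists p gam) as (K & HK & Hgen).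
  set (B := IZR (2 * K)). assert (HB : 1 < B) by (apply IZR_lt; lia).
  assert (HlnB : 0 < ln B) by (rewrite <- ln_1; apply ln_increasing; lra).
  set (c := dl / (C * (R1 + 1) ^ 2)).
  assert (Hc : 0 < c) by (apply Rdiv_lt_0_compat, Rmult_lt_0_compat, pow_lt; lra).
  exists (/ (4 * (ln B + 1))). split; [apply Rinv_0_lt_compat; lra|].
  exists (up (exp (Rabs (ln c) + 2 * ln 2))).
  intros q Hq Hq0 h Hh _ j Hj z Hz n Hn a b Ha Hb Hcong Hd.
  destruct (list_eq_dec Nat.eq_dec a b) as [|Hab]; [assumption|exfalso].
  rewrite Cdist_Cmod in Hd.
  assert (HBn : 2 * B ^ n < IZR q).
  { apply (exp_budget B c h (IZR q) n); try assumption.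
    - apply IZR_lt. assert (Hq1 : (1 < q)%Z) by apply Hq. lia.
    - exact (close_distinct_words_height p gam cen rad HS dl R1 K Hdl Hsep HR1p HR1 HK Hgen
        C h n j z a b HC Hj Hz Ha Hb Hab Hd).
    - now apply lt_ln_of_up_le. }
  apply (distinct_words_gword_neq p gam cen rad HS dl R1 K Hdl Hsep HR1p HR1 HK Hgen n j z a b);
    try assumption.
  apply (mat_cong_small_eq q ((2 * K) ^ Z.of_nat n)); try assumption.
  - destruct Ha as [(<- & Fa & _) _]. now apply gword_bounded.
  - destruct Hb as [(<- & Fb & _) _]. now apply gword_bounded.
  - apply lt_IZR. now rewrite mult_IZR, <- pow_IZR.
Qed.
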